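(* Let $A$ be a nontrivial closed class of decision tables from $\mathcal M_2^\infty$ and $\psi$ a bounded complexity measure. If $\mathcal H^\infty_{\psi,A}$ is everywhere defined, then for every $n\in\omega$ the value $Z_{\psi,A}(n)$ is defined and $\mathcal H^\infty_{\psi,A}(3n)\ge\sqrt{2Z_{\psi,A}(n)}-3$.
   Context: Notation: $\omega=\{0,1,2,\dots\}$; $\mathcal P(\omega)$ is the set of nonempty finite subsets of $\omega$; $E_2=\{0,1\}$. $P=\{f_i:i\in\omega\}$ is a set of attributes, $f_i\neq f_j$ for $i\ne j$. Decision tables: $\mathcal M_2^\infty$ is the set of rectangular tables filled with numbers from $E_2$, whose columns are labeled with pairwise different attributes from $P$, whose rows are pairwise different, and each row of which is labeled with a set from $\mathcal P(\omega)$ (its set of decisions). The empty table (no rows) is denoted $\Lambda$ and belongs to $\mathcal M_2^\infty$. For $T\in\mathcal M_2^\infty$: $\Pi(T)$ is the intersection of the decision sets of all rows (common decisions); $\mathrm{At}(T)$ is the set of attributes labeling columns; $N(T)$ is the number of rows. For nonempty $T$ and a word $\alpha=(f_{i_1},\delta_1)\cdots(f_{i_m},\delta_m)$ with $f_{i_j}\in\mathrm{At}(T)$, $\delta_j\in E_2$, $T\alpha$ is the subtable of $T$ consisting of the rows having value $\delta_j$ in the column $f_{i_j}$ for all $j$; $T\lambda=T$ for the empty word $\lambda$. Operations: for $D\subseteq\mathrm{At}(T)$, $I(D,T)$ is obtained from $T$ by deleting the columns labeled with attributes from $D$ and, in each group of rows coinciding on the remaining columns, keeping only the first row; $I(\mathrm{At}(T),T)=\Lambda$.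 For $\nu:E_2^{|\mathrm{At}(T)|}\to\mathcal P(\omega)$, $J(\nu,T)$ is obtained by replacing the decision set of each row $\bar\delta$ by $\nu(\bar\delta)$. $[T]=\{J(\nu,I(D,T)):D\subseteq\mathrm{At}(T),\ \nu:E_2^{|\mathrm{At}(T)\setminus D|}\to\mathcal P(\omega)\}$; for nonempty $A\subseteq\mathcal M_2^\infty$, $[A]=\bigcup_{T\in A}[T]$. $A$ is a closed class if $[A]=A$; nontrivial if it contains a nonempty table. Decision trees: a $2$-decision tree is a finite directed rooted tree with at least two nodes in which the root and the edges leaving the root are unlabeled, each terminal node is labeled with a decision from $\omega$, and each other node is labeled with an attribute from $P$, each edge leaving such a node being labeled with a number from $E_2$. $\mathrm{At}(\Gamma)$ is the set of attributes labeling nodes of $\Gamma$. For a complete path $\tau=v_1,d_1,\dots,v_m,d_m,v_{m+1}$ (from the root to a terminal node), $\pi(\tau)=\lambda$ if $m=1$, and otherwise $\pi(\tau)=(f_{i_2},\delta_2)\cdots(f_{i_m},\delta_m)$ where $v_j$ is labeled $f_{i_j}$ and $d_j$ is labeled $\delta_j$; $T(\tau)=T\pi(\tau)$. For $T\ne\Lambda$, a nondeterministic decision tree for $T$ is a $2$-decision tree $\Gamma$ with $\mathrm{At}(\Gamma)\subseteq\mathrm{At}(T)$ such that every row of $T$ belongs to $T(\tau)$ for some complete path $\tau$, and for every complete path $\tau$ either $T(\tau)=\Lambda$ or the decision at the terminal node of $\tau$ belongs to $\Pi(T(\tau))$. A deterministic decision tree for $T$ is a nondeterministic decision tree for $T$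 in which, additionally, exactly one edge leaves the root and the edges leaving any node that is neither the root nor terminal are labeled with pairwise different numbers. Complexity measures: a partially bounded complexity measure is a function $\psi:P^*\to\omega$ on finite words over $P$ such that for all words $\alpha_1,\alpha_2$: $\psi(\alpha_1)=0$ iff $\alpha_1=\lambda$; $\psi(\alpha_1)$ is invariant under permutation of letters; $\psi(\alpha_1)\le\psi(\alpha_1\alpha_2)$; $\psi(\alpha_1\alpha_2)\le\psi(\alpha_1)+\psi(\alpha_2)$. It is bounded if in addition $\psi(\alpha)\ge|\alpha|$ for all $\alpha$. $\psi$ is extended to words $(f_{i_1},\delta_1)\cdots(f_{i_m},\delta_m)$ by $\psi(f_{i_1}\cdots f_{i_m})$ ($\psi(\lambda)=0$). For a $2$-decision tree $\Gamma$, $\psi(\Gamma)=\max_\tau\psi(\pi(\tau))$ over complete paths. For $T\ne\Lambda$, $\psi^d(T)$ (resp. $\psi^a(T)$) is the minimum of $\psi(\Gamma)$ over deterministic (resp. nondeterministic) decision trees $\Gamma$ for $T$; $\psi^d(\Lambda)=\psi^a(\Lambda)=0$. Parameters: $m_\psi(T)=\max\{\psi(f_i):f_i\in\mathrm{At}(T)\}$, $m_\psi(\Lambda)=0$. A table $Q\in\mathcal M_2^\infty$ is complete if $N(Q)=2^{|\mathrm{At}(Q)|}$; $Z(T)$ is the maximum number of columns of a complete table in $[T]$ if such tables exist, and $0$ otherwise; $Z(\Lambda)=0$. For $n\in\omega$: $A_\psi(n)=\{T\in A:m_\psi(T)\le n\}$; $Z_{\psi,A}(n)$ is undefined if $\{Z(T):T\in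 A_\psi(n)\}$ is infinite, else its maximum; $\mathcal H^\infty_{\psi,A}(n)$ is undefined if $\{\psi^d(T):T\in A,\psi^a(T)\le n\}$ is infinite, else its maximum. *)

From mathcomp Require Import all_boot.
From mathcomp Require Import finmap.
Set Implicit Arguments. Unset Strict Implicit. Unset Printing Implicit Defensive.
Local Open Scope fset_scope.

(** Attributes f_i are identified with their index i : nat; E_2 = bool
    (false = 0, true = 1); words over P are [seq nat]. *)

(** A (raw) table: column labels, and rows = (row of values, decision set). *)
Record table := Table {
  cols : seq nat;
  rows : seq (seq bool * {fset nat})
}.

Definition Lambda : table := Table [::] [::].

(** Membership in M_2^infty.  The empty table Lambda is the only table
    without rows, and the only table without columns. *)
Definition wf_table (T : table) : bool :=
  [&& uniq (cols T),
      all (fun r => size r.1 == size (cols T)) (rows T),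
      uniq (map fst (rows T)),
      all (fun r => r.2 != fset0) (rows T) &
      (size (rows T) == 0) == (size (cols T) == 0)].

Definition nonempty_table (T : table) : bool := size (rows T) != 0.

Definition val_at (T : table) (r : seq bool) (a : nat) : bool :=
  nth false r (index a (cols T)).

Definition subtable (T : table) (w : seq (nat * bool)) : table :=
  let rs := filter (fun r => all (fun ab => val_at T r.1 ab.1 == ab.2) w) (rows T) in
  if rs is [::] then Lambda else Table (cols T) rs.

Fixpoint keep_first (s : seq (seq bool * {fset nat})) : seq (seq bool * {fset nat}) :=
  match s with
  | [::] => [::]
  | r :: s' => r :: filter (fun r' => r'.1 != r.1) (keep_first s')
  end.

Definition opI (D : seq nat) (T : table) : table :=
  let cs := filter (fun a => a \notin D) (cols T) in
  if cs is [::] then Lambda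
  else Table cs (keep_first (map (fun r => ([seq val_at T r.1 a | a <- cs], r.2)) (rows T))).

Definition opJ (nu : seq bool -> {fset nat}) (T : table) : table :=
  Table (cols T) (map (fun r => (r.1, nu r.1)) (rows T)).

Definition in_closure (T Q : table) : Prop :=
  exists (D : seq nat) (nu : seq bool -> {fset nat}),
    {subset D <= cols T} /\ (forall x, nu x != fset0) /\ Q = opJ nu (opI D T).

Definition in_M (A : table -> Prop) : Prop := forall T, A T -> wf_table T.

Definition closed_class (A : table -> Prop) : Prop :=
  forall Q, A Q <-> exists T, A T /\ in_closure T Q.

Definition nontrivial (A : table -> Prop) : Prop :=
  exists T, A T /\ nonempty_table T.

Inductive dnode :=
| DLeaf of nat
| DNode of nat & seq (bool * dnode).

(** A 2-decision tree is given by the list of subtrees hanging from the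
    (unlabelled) root via unlabelled edges. *)
Definition dtree := seq dnode.

Fixpoint wf_node (t : dnode) : bool :=
  match t with
  | DLeaf _ => true
  | DNode _ ch => (size ch != 0) && all (fun bc => let: (_, c) := bc in wf_node c) ch
  end.

Definition wf_tree (G : dtree) : bool := (size G != 0) && all wf_node G.

Fixpoint det_node (t : dnode) : bool :=
  match t with
  | DLeaf _ => true
  | DNode _ ch => uniq (map fst ch) && all (fun bc => let: (_, c) := bc in det_node c) ch
  end.

Definition det_tree (G : dtree) : bool := (size G == 1) && all det_node G.

Fixpoint node_attrs (t : dnode) : seq nat :=
  match t with
  | DLeaf _ => [::]
  | DNode a ch => a :: flatten (map (fun bc => let: (_, c) := bc in node_attrs c) ch)
  end.

Definition tree_attrs (G : dtree) : seq nat := flatten (map node_attrs G).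

Fixpoint node_paths (t : dnode) : seq (seq (nat * bool) * nat) :=
  match t with
  | DLeaf d => [:: ([::], d)]
  | DNode a ch =>
      flatten (map (fun bc => let: (b, c) := bc in
                     map (fun p => ((a, b) :: p.1, p.2)) (node_paths c)) ch)
  end.

Definition tree_paths (G : dtree) : seq (seq (nat * bool) * nat) :=
  flatten (map node_paths G).

Definition is_ndt (T : table) (G : dtree) : Prop :=
  [/\ wf_tree G,
      {subset tree_attrs G <= cols T},
      (forall r, r \in rows T ->
         exists2 p, p \in tree_paths G & r \in rows (subtable T p.1)) &
      (forall p, p \in tree_paths G ->
         rows (subtable T p.1) = [::] \/
         (forall r, r \in rows (subtable T p.1) -> p.2 \in r.2))].

Definition is_dt (T : table) (G : dtree) : Prop := is_ndt T G /\ det_tree G.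

Definition partially_bounded (psi : seq nat -> nat) : Prop :=
  [/\ (forall w, psi w = 0 <-> w = [::]),
      (forall w1 w2, perm_eq w1 w2 -> psi w1 = psi w2),
      (forall w1 w2, psi w1 <= psi (w1 ++ w2)) &
      (forall w1 w2, psi (w1 ++ w2) <= psi w1 + psi w2)].

Definition bounded_measure (psi : seq nat -> nat) : Prop :=
  partially_bounded psi /\ (forall w, size w <= psi w).

Definition tree_psi (psi : seq nat -> nat) (G : dtree) : nat :=
  \max_(p <- tree_paths G) psi (map fst p.1).

Definition is_psid (psi : seq nat -> nat) (T : table) (k : nat) : Prop :=
  if nonempty_table T then
    (exists G, is_dt T G /\ tree_psi psi G = k) /\
    (forall G, is_dt T G -> k <= tree_psi psi G)
  else k = 0.

Definition is_psia (psi : seq nat -> nat) (T : table) (k : nat) : Prop :=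
  if nonempty_table T then
    (exists G, is_ndt T G /\ tree_psi psi G = k) /\
    (forall G, is_ndt T G -> k <= tree_psi psi G)
  else k = 0.

Definition m_psi (psi : seq nat -> nat) (T : table) : nat :=
  \max_(a <- cols T) psi [:: a].

Definition complete (Q : table) : bool := size (rows Q) == 2 ^ size (cols Q).

Definition is_Z (T : table) (k : nat) : Prop :=
  (exists Q, [/\ in_closure T Q, complete Q, size (cols Q) = k &
                 forall Q', in_closure T Q' -> complete Q' -> size (cols Q') <= k])
  \/ ((forall Q, in_closure T Q -> ~~ complete Q) /\ k = 0).

Definition is_max (S : nat -> Prop) (m : nat) : Prop := S m /\ forall k, S k -> k <= m.

Definition Zset (psi : seq nat -> nat) (A : table -> Prop) (n : nat) (k : nat) : Prop :=
  exists T, [/\ A T, m_psi psi T <= n & is_Z T k].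

Definition Hset (psi : seq nat -> nat) (A : table -> Prop) (n : nat) (k : nat) : Prop :=
  exists T, [/\ A T, (exists2 a, is_psia psi T a & a <= n) & is_psid psi T k].

Definition Z_value psi A n z := is_max (Zset psi A n) z.
Definition Z_defined psi A n := exists z, Z_value psi A n z.

Definition H_value psi A n h := is_max (Hset psi A n) h.
Definition H_defined psi A n := exists h, H_value psi A n h.

(* Let Q in [T] be complete with at least tri t = t(t+1)/2 columns, where T in A has
   m_psi(T) <= n.  Arrange tri t of its columns as a pyramid whose node (i, j), i + j < t,
   has children (i+1, j) and (i, j+1), and relabel each row x by the decisions: one for the
   apex if it is 1 in x, and one for every pit of x, a 0-node whose children are all 1-nodes.
   Descending along 0-nodes from a 0-apex shows that every row gets a decision, and each
   decision is certified by at most three columns, so the relabelled table R, which lies in A,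
   has psi^a(R) <= 3n.

   Against a deterministic tree, an adversary keeps consistent some row that is 0 exactly on
   a monotone lattice path from the apex to the base; the only decision of such a row is the
   endpoint of its path.  It answers 1 whenever some path avoiding all columns answered 1 so
   far misses the queried column.  When the tree commits to a decision, the base node u it
   names has been answered 0 and every avoiding path ends at u; each of the t-1 branches of
   a consistent path, which turn at step k and then go straight, misses u and therefore meets
   its own column answered 1.  Hence psi^d(R) >= t, so Z(T) >= tri t forces H(3n) >= t. *)

From mathcomp Require Import all_boot finmap zify.
From Stdlib Require Import Classical Wf_nat.
Set Implicit Arguments. Unset Strict Implicit. Unset Printing Implicit Defensive.

Fixpoint tri (s : nat) : nat := if s is s'.+1 then tri s' + s'.+1 else 0.

Lemma leq_tri : {homo tri : s s' / s <= s'}.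
Proof.
move=> s s'; elim: s' => [|s' IH]; first by rewrite leqn0 => /eqP ->.
by rewrite leq_eqVlt ltnS => /orP [/eqP -> //| /IH /=]; lia.
Qed.

Lemma tri_ltn s s' j : s < s' -> j <= s -> tri s + j < tri s'.
Proof. by move=> lt_ss' le_js; have := leq_tri lt_ss' => /=; lia. Qed.

Lemma double_tri s : (tri s).*2 = s * s.+1.
Proof. by elim: s => //= s IH; rewrite doubleD IH; lia. Qed.

Lemma tri_bracket z : exists t, tri t <= z < tri t.+1.
Proof.
elim: z => [|z [t /andP [lo hi]]]; first by exists 0.
have [lt_z|le_z] := ltnP z.+1 (tri t.+1); first by exists t; rewrite lt_z andbT; lia.
by exists t.+1; apply/andP; split => //=; move: hi le_z => /=; lia.
Qed.

Definition cantor_pair (u : nat * nat) : nat := tri (u.1 + u.2) + u.2.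

Lemma cantor_pair_inj : injective cantor_pair.
Proof.
move=> [i j] [i' j']; rewrite /cantor_pair /= => E.
case: (ltngtP (i + j) (i' + j')) => cmp.
- by have := tri_ltn cmp (leq_addl i j); lia.
- by have := tri_ltn cmp (leq_addl i' j'); lia.
- rewrite cmp in E; have Ej : j = j' by lia.
  by subst j'; have -> : i = i' by lia.
Qed.

Lemma ex_minimum (P : nat -> Prop) : (exists k, P k) -> exists k, P k /\ forall j, P j -> k <= j.
Proof.
move=> exP; have [k [[Pk min_k] _]] :=
  dec_inh_nat_subset_has_unique_least_element P (fun k => classic (P k)) exP.
by exists k; split => // j /min_k /leP.
Qed.

Lemma ex_maximum (P : nat -> Prop) B : (exists k, P k) -> (forall k, P k -> k <= B) ->
  exists m, is_max P m.
Proof.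
move=> [k0 Pk0] le_B.
have [|j [[le_jB PBj] min_j]] := @ex_minimum (fun j => j <= B /\ P (B - j)).
  by exists (B - k0); rewrite leq_subr subKn ?le_B.
exists (B - j); split => // k Pk.
have le_kB := le_B k Pk.
have : j <= B - k by apply: min_j; rewrite leq_subr subKn.
lia.
Qed.

Lemma leq_size_disjoint_witnesses (T : eqType) (P : nat -> pred T) (w : seq T) m :
  (forall k, k < m -> has (P k) w) ->
  (forall k k' x, k < m -> k' < m -> x \in w -> P k x -> P k' x -> k = k') ->
  m <= size w.
Proof.
elim: m w => // m IH w has_wit disj.
have lt_w : size (filter (predC (P m)) w) < size w.
  by rewrite size_filter -(count_predC (P m)) -addn1 addnC leq_add2r -has_count has_wit.
apply: leq_ltn_trans lt_w; apply: IH => [k lt_km | k k' y lt_km lt_k'm].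
  have /hasP [y yw Pky] := has_wit k (ltnW lt_km); apply/hasP; exists y => //.
  rewrite mem_filter yw /= andbT; apply/negP => Pmy.
  by have := disj k m y (ltnW lt_km) (ltnSn m) yw Pky Pmy; lia.
by rewrite mem_filter => /andP [_ yw]; apply: disj => //; apply: ltnW.
Qed.

Lemma all_In (T : Type) (P : pred T) s x : all P s -> List.In x s -> P x.
Proof. by elim: s => //= y s IH /andP [Py Ps] [<- | /IH]; last exact. Qed.

Lemma mem_subtable T w r : (r \in rows (subtable T w)) =
  (r \in rows T) && all (fun ab => val_at T r.1 ab.1 == ab.2) w.
Proof.
rewrite andbC -(mem_filter (fun r => all (fun ab => val_at T r.1 ab.1 == ab.2) w)).
by rewrite /subtable; case: filter.
Qed.

Lemma mem_complete_rows Q x : wf_table Q -> complete Q -> size x = size (cols Q) ->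
  x \in map fst (rows Q).
Proof.
case/and5P=> _ /allP size_rows uniq_rows _ _ /eqP card_rows size_x.
apply: contraT => x_new; set m := size (cols Q).
pose tup (y : seq bool) : m.-tuple bool := insubd [tuple of nseq m false] y.
have size_s y : y \in x :: map fst (rows Q) -> size y = m.
  by rewrite inE => /orP [/eqP -> //|/mapP [r /size_rows /eqP ? ->]].
have uniq_tup : uniq (map tup (x :: map fst (rows Q))).
  rewrite map_inj_in_uniq /= ?x_new ?uniq_rows // => y1 y2 /size_s E1 /size_s E2.
  by move/(congr1 val); rewrite !val_insubd E1 E2 eqxx.
have := uniq_leq_size uniq_tup (fun y _ => mem_enum {: m.-tuple bool} y).
by rewrite -cardE card_tuple card_bool /= !size_map card_rows ltnn.
Qed.

Lemma map_nth_index (c : seq nat) (x : seq bool) : uniq c -> size x = size c ->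
  [seq nth false x (index a c) | a <- c] = x.
Proof.
move=> uniq_c size_x; apply: (@eq_from_nth _ false); first by rewrite size_map size_x.
by move=> k; rewrite size_map => lt_k; rewrite (nth_map 0) // index_uniq.
Qed.

Lemma keep_first_id (s : seq (seq bool * {fset nat})) : uniq (map fst s) -> keep_first s = s.
Proof.
elim: s => //= r s IH /andP [r_fresh uniq_s]; rewrite IH //; congr (_ :: _).
apply/all_filterP/allP => r' r'_s; apply: contraNneq r_fresh => <-.
exact: map_f.
Qed.

Lemma opI_nil Q : wf_table Q -> cols Q != [::] -> opI [::] Q = Q.
Proof.
case: Q => c rs /and5P [/= uniq_c /allP size_rs uniq_rs _ _] c_ne.
rewrite /opI; have -> : [seq a <- c | a \notin [::]] = c by apply/all_filterP/allP.
have map_rows : [seq ([seq val_at (Table c rs) r.1 a | a <- c], r.2) | r <- rs] = rs.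
  apply: map_id_in => -[x D] /size_rs /eqP /= size_x.
  by rewrite /val_at /= map_nth_index.
by case: c c_ne {uniq_c size_rs} map_rows => //= ? ? _ ->; rewrite keep_first_id.
Qed.

Lemma closure_cols T Q : in_closure T Q -> {subset cols Q <= cols T}.
Proof.
case=> D [nu [_ [_ ->]]] a; rewrite /opJ /opI /=.
have : {subset [seq a <- cols T | a \notin D] <= cols T}.
  by move=> b; rewrite mem_filter => /andP [].
by case: filter => [|b s] //=; apply.
Qed.

Lemma Lambda_in A : closed_class A -> nontrivial A -> A Lambda.
Proof.
move=> A_closed [T [A_T _]]; apply/A_closed; exists T; split => //.
exists (cols T), (fun _ => [fset 0]%fset); split => //; split.
  by move=> _; apply/eqP => /fsetP /(_ 0); rewrite !inE.
by rewrite /opI (eq_in_filter (a2 := pred0)) ?filter_pred0 // => a /= ->.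
Qed.

Lemma Z_Lambda : is_Z Lambda 0.
Proof. by right; split => // Q [D [nu [_ [_ ->]]]]. Qed.

Fixpoint height (r : dnode) : nat :=
  if r is DNode _ ch then (foldr maxn 0 [seq height bc.2 | bc <- ch]).+1 else 0.

Lemma height_child a (ch : seq (bool * dnode)) b c :
  List.In (b, c) ch -> height c < height (DNode a ch).
Proof.
rewrite /= ltnS; elim: ch => //= bc ch IH [->|/IH le_c]; first exact: leq_maxl.
exact: leq_trans le_c (leq_maxr _ _).
Qed.

Lemma child_eq (ch : seq (bool * dnode)) b c c' :
  uniq (map fst ch) -> List.In (b, c) ch -> List.In (b, c') ch -> c = c'.
Proof.
elim: ch => //= [[b0 c0] ch IH] /andP [b0_fresh uniq_ch].
have in_fst b1 c1 : List.In (b1, c1) ch -> b1 \in map fst ch.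
  by elim: (ch) => //= ? ? IHch [->|/IHch]; rewrite inE ?eqxx // => ->; rewrite orbT.
case=> [[E1 E2]|bc_ch]; case=> [[E3 E4]|bc'_ch]; subst => //.
- by move: b0_fresh; rewrite (in_fst _ _ bc'_ch).
- by move: b0_fresh; rewrite (in_fst _ _ bc_ch).
- exact: IH.
Qed.

Lemma node_pathsP a (ch : seq (bool * dnode)) p : p \in node_paths (DNode a ch) ->
  exists b c p', [/\ List.In (b, c) ch, p' \in node_paths c & p = ((a, b) :: p'.1, p'.2)].
Proof.
elim: ch => //= [[b c] ch IH]; rewrite mem_cat => /orP [/mapP [p' p'_c ->]|/IH].
  by exists b, c, p'; split => //; left.
by case=> b' [c' [p' [bc' p'_c' ->]]]; exists b', c', p'; split => //; right.
Qed.

Lemma node_paths_child a (ch : seq (bool * dnode)) b c p : List.In (b, c) ch ->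
  p \in node_paths c -> ((a, b) :: p.1, p.2) \in node_paths (DNode a ch).
Proof.
move=> + p_c; elim: ch => //= [[b0 c0] ch IH] [[-> ->]|/IH p_ch]; rewrite mem_cat.
  by rewrite (map_f (fun p => ((a, b) :: p.1, p.2)) p_c).
by rewrite p_ch orbT.
Qed.

Lemma psia_exists psi T G : nonempty_table T -> is_ndt T G ->
  exists2 k, is_psia psi T k & k <= tree_psi psi G.
Proof.
move=> T_ne G_T; rewrite /is_psia T_ne.
have [|k [[G' [G'_T <-]] min_k]] :=
  @ex_minimum (fun k => exists G, is_ndt T G /\ tree_psi psi G = k).
  by exists (tree_psi psi G), G.
exists (tree_psi psi G'); last by apply: min_k; exists G.
by split; [exists G' | move=> G'' G''_T; apply: min_k; exists G''].
Qed.

Lemma psid_exists psi T G : nonempty_table T -> is_dt T G ->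
  exists2 G', is_dt T G' & is_psid psi T (tree_psi psi G').
Proof.
move=> T_ne G_T; rewrite /is_psid T_ne.
have [|k [[G' [G'_T <-]] min_k]] :=
  @ex_minimum (fun k => exists G, is_dt T G /\ tree_psi psi G = k).
  by exists (tree_psi psi G), G.
exists G' => //; split; first by exists G'.
by move=> G'' G''_T; apply: min_k; exists G''.
Qed.

Section Pyramid.
Variable t : nat.

Definition nodes : seq (nat * nat) :=
  [seq (i, j) | i <- iota 0 t, j <- iota 0 (t - i)].

Lemma mem_nodes u : (u \in nodes) = (u.1 + u.2 < t).
Proof.
case: u => i j /=; apply/allpairsPdep/idP => [[a [b [Ha Hb [-> ->]]]]|H].
- by move: Ha Hb; rewrite !mem_iota; lia.
- by exists i, j; rewrite !mem_iota; split => //; lia.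
Qed.

Lemma apex_node : 0 < t -> (0, 0) \in nodes.
Proof. by rewrite mem_nodes. Qed.

Lemma cantor_pair_node u : u \in nodes -> cantor_pair u < tri t.
Proof. by rewrite mem_nodes => lt_ut; apply: tri_ltn => //; lia. Qed.

Definition base_node (u : nat * nat) : bool := u.1 + u.2 == t.-1.

Lemma children_nodes u : u \in nodes -> ~~ base_node u ->
  (u.1.+1, u.2) \in nodes /\ (u.1, u.2.+1) \in nodes.
Proof. by rewrite !mem_nodes /base_node /= => ? /eqP ?; split; lia. Qed.

Definition node_val (x : seq bool) (u : nat * nat) : bool := nth false x (cantor_pair u).

Definition pit (u : nat * nat) (x : seq bool) : bool :=
  ~~ node_val x u &&
  (base_node u || node_val x (u.1.+1, u.2) && node_val x (u.1, u.2.+1)).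

Lemma pit_exists x : 0 < t -> ~~ node_val x (0, 0) -> exists2 u, u \in nodes & pit u x.
Proof.
move=> t_gt0; suff descend m i j : i + j + m = t.-1 -> ~~ node_val x (i, j) ->
    exists2 u, u \in nodes & pit u x by exact: descend.
elim: m i j => [|m IH] i j Hm Hx.
  exists (i, j); first by rewrite mem_nodes /=; lia.
  by rewrite /pit Hx /base_node /= (_ : i + j == t.-1) //; apply/eqP; lia.
case E1: (node_val x (i.+1, j)); last by apply: (IH i.+1 j); [lia | rewrite E1].
case E2: (node_val x (i, j.+1)); last by apply: (IH i j.+1); [lia | rewrite E2].
exists (i, j); first by rewrite mem_nodes /=; lia.
by rewrite /pit Hx E1 E2 orbT.
Qed.

(* A word [d] of length [t.-1] encodes the lattice path from the apex to the base
   that goes from (i, j) to (i, j.+1) at a step [true] and to (i.+1, j) otherwise. *)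
Definition ups (d : seq bool) (k : nat) : nat := count id (take k d).

Definition on_path (d : seq bool) (u : nat * nat) : bool :=
  (u.1 + u.2 < t) && (ups d (u.1 + u.2) == u.2).

Lemma ups_leq d s s' : s <= s' -> ups d s <= ups d s' <= ups d s + (s' - s).
Proof.
move=> le_ss'; rewrite /ups -(subnKC le_ss') takeD count_cat leq_addr leq_add2l /=.
by apply: leq_trans (count_size _ _) _; rewrite size_take_min; lia.
Qed.

Lemma ups_S d k : k < size d -> ups d k.+1 = ups d k + nth false d k.
Proof. by move=> lt_kd; rewrite /ups (take_nth false lt_kd) -cats1 count_cat /= addn0. Qed.

Lemma on_path_apex d : 0 < t -> on_path d (0, 0).
Proof. by move=> t_gt0; rewrite /on_path /= t_gt0 /ups take0. Qed.

Lemma on_path_step d u : size d = t.-1 -> on_path d u -> ~~ base_node u ->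
  on_path d (u.1.+1, u.2) || on_path d (u.1, u.2.+1).
Proof.
case: u => i j size_d; rewrite /on_path /base_node /=.
move=> /andP [lt_t /eqP Eups] /eqP nbase.
have lt_ij : i + j < size d by rewrite size_d; lia.
case: (nth false d (i + j)) (ups_S lt_ij) => /= E.
- by apply/orP; right; rewrite addnS E Eups; lia.
- by apply/orP; left; rewrite addSn E Eups; lia.
Qed.

Definition branch (d : seq bool) (k : nat) : seq bool :=
  take k d ++ nseq (t.-1 - k) (~~ nth false d k).

Section Branch.
Variables (d : seq bool) (k : nat).
Hypotheses (size_d : size d = t.-1) (lt_k : k < t.-1).

Lemma size_take_path : size (take k d) = k.
Proof. by rewrite size_take_min size_d; lia. Qed.

Lemma size_branch : size (branch d k) = t.-1.
Proof. by rewrite /branch size_cat size_take_path size_nseq; lia. Qed.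

Lemma ups_branch_lo s : s <= k -> ups (branch d k) s = ups d s.
Proof.
move=> le_sk; rewrite /ups /branch take_cat size_take_path.
case: ltnP => [lt_sk|le_ks]; first by rewrite take_takel // ltnW.
have -> : s = k by lia.
by rewrite subnn take0 cats0.
Qed.

Lemma ups_branch_hi s : k <= s <= t.-1 ->
  ups (branch d k) s = ups d k + (~~ nth false d k) * (s - k).
Proof.
case/andP=> le_ks le_st; rewrite /ups /branch take_cat size_take_path.
case: ltnP => [|_]; first by lia.
rewrite count_cat take_nseq; last by lia.
by case: (~~ nth false d k); rewrite ?count_nseq /= ?mul1n ?mul0n.
Qed.

Lemma on_branch_off_path u : k < u.1 + u.2 -> on_path (branch d k) u -> ~~ on_path d u.
Proof.
case: u => i j; rewrite /on_path /= => lt_kij /andP [lt_t /eqP]; rewrite lt_t /=.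
rewrite ups_branch_hi; last by apply/andP; split; lia.
have := ups_leq d (ltnW lt_kij); have := ups_leq d lt_kij.
rewrite ups_S ?size_d //.
by case: (nth false d k) => /= /andP [? ?] /andP [? ?] E; apply/eqP; lia.
Qed.

End Branch.

Lemma branches_disjoint_off_path d k k' u : size d = t.-1 -> k < k' -> k' < t.-1 ->
  on_path (branch d k) u -> on_path (branch d k') u -> ~~ on_path d u -> False.
Proof.
case: u => i j size_d lt_kk' lt_k' + + /negP off; have lt_k : k < t.-1 by lia.
rewrite /on_path /= => /andP [lt_t /eqP E] /andP [_ /eqP E']; apply: off.
rewrite /on_path lt_t /=.
have [le_ijk'|lt_k'ij] := leqP (i + j) k'.
  by rewrite -(ups_branch_lo size_d lt_k' le_ijk') E'.
move: E E'; rewrite (ups_branch_hi size_d lt_k); last by apply/andP; split; lia.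
rewrite (ups_branch_hi size_d lt_k'); last by apply/andP; split; lia.
have := ups_leq d (ltnW lt_kk'); have := ups_leq d lt_kk'; rewrite ups_S ?size_d //.
by case: (nth false d k); case: (nth false d k') => /= /andP [? ?] /andP [? ?] ? ?; lia.
Qed.

(* The odd code [1] for the apex and even codes for pits keep decisions distinct. *)
Definition decisions (x : seq bool) : seq nat :=
  (if node_val x (0, 0) then [:: 1] else [::]) ++
  [seq (cantor_pair u).*2 | u <- nodes & pit u x].

Lemma decisionsP x dc : dc \in decisions x ->
  (node_val x (0, 0) /\ dc = 1) \/
  exists2 u, u \in nodes & pit u x /\ dc = (cantor_pair u).*2.
Proof.
rewrite mem_cat => /orP [|/mapP [u]]; last by rewrite mem_filter => /andP [? ?] ->; right; exists u.
by case: (node_val x (0, 0)) => //; rewrite inE => /eqP ->; left.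
Qed.

Lemma decisions_apex x : node_val x (0, 0) -> 1 \in decisions x.
Proof. by move=> apex1; rewrite mem_cat apex1 mem_head. Qed.

Lemma decisions_pit x u : u \in nodes -> pit u x -> (cantor_pair u).*2 \in decisions x.
Proof.
move=> u_node u_pit; rewrite mem_cat (map_f (fun v => (cantor_pair v).*2)) ?orbT //.
by rewrite mem_filter u_pit.
Qed.

Lemma decisions_neq_nil x : 0 < t -> decisions x != [::].
Proof.
move=> t_gt0; apply/eqP => E; case apex1: (node_val x (0, 0)).
  by have := decisions_apex apex1; rewrite E.
have [u u_node u_pit] := pit_exists t_gt0 (negbT apex1).
by have := decisions_pit u_node u_pit; rewrite E.
Qed.

End Pyramid.

Section Labelling.
Variables (t : nat) (cs : seq nat).
Hypotheses (t_gt0 : 0 < t) (uniq_cs : uniq cs) (tri_cs : tri t <= size cs).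

Local Notation nodes := (nodes t).
Local Notation on_path := (on_path t).
Local Notation branch := (branch t).
Local Notation pit := (pit t).
Local Notation base_node := (base_node t).
Local Notation decisions := (decisions t).

(* The first [tri t] columns are laid out as a pyramid of height [t]. *)
Definition attr (v : nat * nat) : nat := nth 0 cs (cantor_pair v).

Definition entry (x : seq bool) (a : nat) : bool := nth false x (index a cs).

Definition agrees (x : seq bool) (w : seq (nat * bool)) : bool :=
  all (fun ab => entry x ab.1 == ab.2) w.

Lemma agrees_cat x w1 w2 : agrees x (w1 ++ w2) = agrees x w1 && agrees x w2.
Proof. exact: all_cat. Qed.

Lemma cantor_pair_cs v : v \in nodes -> cantor_pair v < size cs.
Proof. by move=> v_node; apply: leq_trans (cantor_pair_node v_node) tri_cs. Qed.

Lemma attr_in v : v \in nodes -> attr v \in cs.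
Proof. by move=> v_node; apply/mem_nth/cantor_pair_cs. Qed.

Lemma entry_attr x v : v \in nodes -> entry x (attr v) = node_val x v.
Proof. by move=> v_node; rewrite /entry index_uniq ?cantor_pair_cs. Qed.

(* Otherwise flipping bit [k] of [x0] would keep agreement with [w]. *)
Lemma forced_literal w x0 k b : size x0 = size cs -> agrees x0 w -> k < size cs ->
  (forall x, size x = size cs -> agrees x w -> nth false x k = b) ->
  (nth 0 cs k, b) \in w.
Proof.
move=> size_x0 x0_w lt_k forced.
have [/hasP [[a b'] ab_w /= /eqP Ea]|/hasPn no_lit] :=
  boolP (has (fun ab => ab.1 == nth 0 cs k) w).
  move/allP: (x0_w) => /(_ _ ab_w) /=.
  by rewrite Ea /entry index_uniq // forced // => /eqP ->; rewrite -Ea.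
pose y := set_nth false x0 k (~~ nth false x0 k).
have size_y : size y = size cs by rewrite size_set_nth size_x0; apply/maxn_idPr.
have y_w : agrees y w.
  apply/allP => [[a b'] ab_w]; move/allP: x0_w => /(_ _ ab_w) /=.
  rewrite /entry /y nth_set_nth /=; case: (index a cs =P k) => // idx_a.
  have a_cs : a \in cs by rewrite -index_mem idx_a.
  by have := no_lit _ ab_w; rewrite /= -idx_a nth_index // eqxx.
have := forced y size_y y_w; rewrite nth_set_nth /= eqxx forced //.
by case: b {forced}.
Qed.

Definition path_row (d : seq bool) : seq bool :=
  [seq ~~ (k \in [seq cantor_pair u | u <- nodes & on_path d u]) | k <- iota 0 (size cs)].

Lemma size_path_row d : size (path_row d) = size cs.
Proof. by rewrite size_map size_iota. Qed.

Lemma nth_path_row d k : k < size cs ->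
  nth false (path_row d) k = ~~ (k \in [seq cantor_pair u | u <- nodes & on_path d u]).
Proof. by move=> lt_k; rewrite (nth_map 0) ?size_iota // nth_iota. Qed.

Lemma node_val_path_row d v : v \in nodes -> node_val (path_row d) v = ~~ on_path d v.
Proof.
move=> v_node; rewrite /node_val nth_path_row ?cantor_pair_cs //.
by rewrite (mem_map cantor_pair_inj) mem_filter v_node andbT.
Qed.

Lemma path_rows_differ d d' a : entry (path_row d) a -> ~~ entry (path_row d') a ->
  exists2 v, v \in nodes & [/\ on_path d' v, ~~ on_path d v & cantor_pair v = index a cs].
Proof.
move=> a_d; have lt_a : index a cs < size cs.
  by move: a_d; rewrite /entry ltnNge; apply: contraL => ?; rewrite nth_default ?size_path_row.
rewrite /entry nth_path_row // negbK => /mapP [v]; rewrite mem_filter => /andP [v_d' v_node] Ev.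
exists v => //; rewrite Ev; split => //; move: a_d.
by rewrite /entry Ev -/(node_val _ v) node_val_path_row.
Qed.

Lemma pit_path_row d u : size d = t.-1 -> u \in nodes -> pit u (path_row d) ->
  on_path d u && base_node u.
Proof.
move=> size_d u_node; rewrite /pit node_val_path_row // negbK => /andP [u_d].
rewrite u_d; case: (boolP (base_node u)) => //= nbase.
have [l_node r_node] := children_nodes u_node nbase.
rewrite !node_val_path_row // => /andP [/negbTE l_off /negbTE r_off].
by have := on_path_step size_d u_d nbase; rewrite l_off r_off.
Qed.

Definition avoids (d : seq bool) (w : seq (nat * bool)) : bool :=
  all (fun ab => ab.2 ==> entry (path_row d) ab.1) w.

Lemma agrees_avoids d w : agrees (path_row d) w -> avoids d w.
Proof. by move/allP => d_w; apply/allP => ab /d_w /eqP ->; exact: implybb. Qed.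

(* The adversary keeps some path row consistent, and promises consistency to
   every path meeting no positively answered column. *)
Definition adversary_inv (w : seq (nat * bool)) : Prop :=
  (exists2 d, size d = t.-1 & agrees (path_row d) w) /\
  (forall d, size d = t.-1 -> avoids d w -> agrees (path_row d) w).

Lemma adversary_inv_nil : adversary_inv [::].
Proof. by split=> //; exists (nseq t.-1 false); rewrite ?size_nseq. Qed.

Lemma adversary_step w a : adversary_inv w -> exists b, adversary_inv (w ++ [:: (a, b)]).
Proof.
case=> [[d1 size_d1 d1_w] inv].
have [[d [size_d d_w a_d]]|no_d] :=
  classic (exists d, [/\ size d = t.-1, avoids d w & entry (path_row d) a]).
  exists true; split; first by exists d; rewrite // agrees_cat inv //= a_d.
  move=> d' size_d'; rewrite /avoids all_cat agrees_cat /= !andbT => /andP [d'_w a_d'].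
  by rewrite inv // a_d'.
have a_off d' : size d' = t.-1 -> avoids d' w -> ~~ entry (path_row d') a.
  by move=> ? ?; apply/negP => ?; apply: no_d; exists d'.
exists false; split.
  by exists d1; rewrite // agrees_cat d1_w /= eqbF_neg a_off ?agrees_avoids.
move=> d' size_d'; rewrite /avoids all_cat agrees_cat /= andbT => d'_w.
by rewrite inv //= andbT eqbF_neg a_off.
Qed.

Definition covers (r : dnode) (w : seq (nat * bool)) : Prop :=
  forall x, size x = size cs -> agrees x w -> exists2 p, p \in node_paths r & agrees x p.1.

Lemma covers_agreeing_child a ch w b x : covers (DNode a ch) w -> size x = size cs ->
  agrees x (w ++ [:: (a, b)]) ->
  exists c p, [/\ List.In (b, c) ch, p \in node_paths c & agrees x p.1].
Proof.
move=> cov size_x; rewrite agrees_cat /= andbT => /andP [x_w /eqP x_a].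
have [p /node_pathsP [b' [c [p' [bc p'_c ->]]]]] := cov x size_x x_w.
rewrite /agrees /= x_a => /andP [/eqP Eb x_p'].
by subst b'; exists c, p'.
Qed.

Lemma covers_child a ch w b : uniq (map fst ch) -> covers (DNode a ch) w ->
  (exists2 x, size x = size cs & agrees x (w ++ [:: (a, b)])) ->
  exists2 c, List.In (b, c) ch & covers c (w ++ [:: (a, b)]).
Proof.
move=> uniq_ch cov [x0 size_x0 x0_w].
have [c [_ [bc _ _]]] := covers_agreeing_child cov size_x0 x0_w.
exists c => // x size_x x_w.
have [c' [p [bc' p_c' x_p]]] := covers_agreeing_child cov size_x x_w.
by exists p; rewrite // (child_eq uniq_ch bc bc').
Qed.

Lemma adversary_path r w : det_node r -> adversary_inv w -> covers r w ->
  exists2 p, p \in node_paths r & adversary_inv (w ++ p.1).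
Proof.
move: {2}(height r) (leqnn (height r)) => n.
elim: n r w => [|n IH] [dl|a ch] w //= le_h det inv cov;
  try by exists ([::], dl); rewrite ?mem_head ?cats0.
case/andP: det => uniq_ch det_ch.
have [b inv_b] := adversary_step a inv.
have [c bc cov_c] : exists2 c, List.In (b, c) ch & covers c (w ++ [:: (a, b)]).
  apply: covers_child => //; case: inv_b => [[d size_d d_w] _].
  by exists (path_row d); rewrite ?size_path_row.
have det_c : det_node c := all_In det_ch bc.
have le_hc : height c <= n by rewrite -ltnS; apply: leq_trans le_h; apply: height_child bc.
have [p p_c inv_p] := IH c _ le_hc det_c inv_b cov_c; rewrite -catA in inv_p.
exists ((a, b) :: p.1, p.2) => //.
exact: node_paths_child bc p_c.
Qed.

Lemma forced_pit w dc : adversary_inv w ->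
  (forall x, size x = size cs -> agrees x w -> dc \in decisions x) ->
  exists2 u, u \in nodes & forall x, size x = size cs -> agrees x w -> pit u x.
Proof.
move=> [[d1 size_d1 d1_w] _] dc_forced.
have apex_d1 : ~~ node_val (path_row d1) (0, 0).
  by rewrite node_val_path_row ?apex_node ?on_path_apex.
have [[apex1 _]|[u u_node [_ Edc]]] := decisionsP (dc_forced _ (size_path_row d1) d1_w).
  by rewrite apex1 in apex_d1.
exists u => // x size_x x_w.
have [[_ E1]|[u' u'_node [u'_pit]]] := decisionsP (dc_forced x size_x x_w).
  by move: Edc; rewrite E1 => /(congr1 odd); rewrite odd_double.
by rewrite Edc => /double_inj /cantor_pair_inj ->.
Qed.

Lemma avoiding_paths_reach w u : adversary_inv w -> u \in nodes -> (attr u, false) \in w ->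
  forall d, size d = t.-1 -> avoids d w -> on_path d u.
Proof.
move=> [_ inv] u_node lit_u d size_d /(inv _ size_d) /allP /(_ _ lit_u) /=.
by rewrite entry_attr // node_val_path_row // => /eqP /negbFE.
Qed.

(* Each branch of [d1] misses the base node [u], so it meets a column answered
   positively; distinct branches meet distinct such columns off [d1]. *)
Lemma count_positive_answers_ge w d1 u : size d1 = t.-1 -> agrees (path_row d1) w ->
  on_path d1 u -> base_node u ->
  (forall d, size d = t.-1 -> avoids d w -> on_path d u) -> t.-1 <= count snd w.
Proof.
move=> size_d1 d1_w u_d1 /eqP u_base reach; rewrite -size_filter.
apply: (@leq_size_disjoint_witnesses _ (fun k ab => ~~ entry (path_row (branch d1 k)) ab.1)).
  move=> k lt_k; have br_off : ~~ on_path (branch d1 k) u.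
    apply: contraL u_d1 => /(on_branch_off_path size_d1 lt_k); apply; rewrite u_base.
    exact: lt_k.
  apply/negPn/negP => /hasPn no_wit; move/negP: br_off; apply; apply: reach.
    exact: size_branch.
  apply/allP => ab ab_w; apply/implyP => ab_pos.
  by have := no_wit ab; rewrite mem_filter ab_pos ab_w negbK => ->.
move=> k k' ab lt_k lt_k'; rewrite mem_filter => /andP [ab_pos ab_w].
have ab_d1 : entry (path_row d1) ab.1 by move/allP: d1_w => /(_ _ ab_w) /eqP ->.
move=> /(path_rows_differ ab_d1) [v _ [v_br v_d1 Ev]].
move=> /(path_rows_differ ab_d1) [v' _ [v'_br _ Ev']].
move: v'_br; rewrite -(@cantor_pair_inj v v') ?Ev ?Ev' // => v_br'.
case: (ltngtP k k') => // lt_kk'; exfalso.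
  exact: (branches_disjoint_off_path size_d1 lt_kk' lt_k' v_br v_br' v_d1).
exact: (branches_disjoint_off_path size_d1 lt_kk' lt_k v_br' v_br v_d1).
Qed.

Lemma adversary_decision_depth w dc : adversary_inv w ->
  (forall x, size x = size cs -> agrees x w -> dc \in decisions x) -> t <= size w.
Proof.
move=> inv dc_forced; have [[d1 size_d1 d1_w] _] := inv.
have [u u_node u_pit] := forced_pit inv dc_forced.
have /andP [u_d1 u_base] := pit_path_row size_d1 u_node (u_pit _ (size_path_row d1) d1_w).
have lit_u : (attr u, false) \in w.
  apply: forced_literal (size_path_row d1) d1_w (cantor_pair_cs u_node) _ => x size_x x_w.
  by have /andP [/negbTE] := u_pit x size_x x_w.
have := count_positive_answers_ge size_d1 d1_w u_d1 u_base (avoiding_paths_reach inv u_node lit_u).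
have : 0 < count (predC snd) w by rewrite -has_count; apply/hasP; exists (attr u, false).
by rewrite -(count_predC snd w); lia.
Qed.


Definition decision_set (x : seq bool) : {fset nat} := seq_fset tt (decisions x).

Lemma in_decision_set x dc : (dc \in decision_set x) = (dc \in decisions x).
Proof. by rewrite seq_fsetE. Qed.

Lemma decision_set_neq0 x : decision_set x != fset0.
Proof.
have := decisions_neq_nil x t_gt0; case E: (decisions x) => [|dc s] // _.
by apply/eqP => /fsetP /(_ dc); rewrite in_decision_set E in_fset0 mem_head.
Qed.

Definition first_decision (x : seq bool) : nat := head 0 (decisions x).

Lemma first_decision_in x : first_decision x \in decision_set x.
Proof.
rewrite in_decision_set /first_decision.
by have := decisions_neq_nil x t_gt0; case: (decisions x) => //= ? ? _; apply: mem_head.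
Qed.

(* [pre] records the answers to the queries above the current node. *)
Fixpoint full_tree (c : seq nat) (pre : seq bool) : dnode :=
  if c is a :: c' then
    DNode a [:: (false, full_tree c' (rcons pre false)); (true, full_tree c' (rcons pre true))]
  else DLeaf (first_decision pre).

Lemma full_tree_pathsP c pre p : p \in node_paths (full_tree c pre) ->
  exists2 bs, size bs = size c & p = (zip c bs, first_decision (pre ++ bs)).
Proof.
elim: c pre p => [|a c IH] pre p /=.
  by rewrite inE => /eqP ->; exists [::]; rewrite ?cats0.
rewrite cats0 mem_cat => /orP [] /mapP [p' /IH [bs size_bs ->] ->] /=.
- by exists (false :: bs); rewrite /= ?size_bs // -cats1 -catA.
- by exists (true :: bs); rewrite /= ?size_bs // -cats1 -catA.
Qed.

Lemma full_tree_paths_zip c pre bs : size bs = size c ->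
  (zip c bs, first_decision (pre ++ bs)) \in node_paths (full_tree c pre).
Proof.
elim: c pre bs => [|a c IH] pre [|b bs] //= => [_|[size_bs]]; first by rewrite cats0 inE.
rewrite cats0 mem_cat -cat_rcons.
by case: b; apply/orP; [right | left];
  exact: (map_f (fun p : seq (nat * bool) * nat => (_ :: p.1, p.2)) (IH _ _ size_bs)).
Qed.

Lemma full_tree_det c pre : det_node (full_tree c pre).
Proof. by elim: c pre => [|a c IH] pre //=; rewrite !IH. Qed.

Lemma full_tree_wf c pre : wf_node (full_tree c pre).
Proof. by elim: c pre => [|a c IH] pre //=; rewrite !IH. Qed.

Lemma full_tree_attrs c pre : {subset node_attrs (full_tree c pre) <= c}.
Proof.
elim: c pre => [|a c IH] pre b //=; rewrite !inE cats0 mem_cat.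
by case/orP => [-> //|/orP [] /IH ->]; rewrite orbT.
Qed.

Lemma agrees_zip x : size x = size cs -> agrees x (zip cs x).
Proof.
move=> size_x; apply/allP => [[a b]] /(nthP (0, false)) [k].
rewrite size_zip size_x minnn => lt_k; rewrite nth_zip ?size_x // => -[<- <-].
by rewrite /entry /= index_uniq.
Qed.

Lemma agrees_zip_eq x bs : size x = size cs -> size bs = size cs -> agrees x (zip cs bs) -> x = bs.
Proof.
move=> size_x size_bs /allP x_bs; apply: (@eq_from_nth _ false); first by rewrite size_x.
move=> k; rewrite size_x => lt_k.
have : (nth 0 cs k, nth false bs k) \in zip cs bs.
  by rewrite -nth_zip // mem_nth // size_zip size_bs minnn.
by move/x_bs; rewrite /entry /= index_uniq // => /eqP.
Qed.

Definition pit_word (u : nat * nat) : seq (nat * bool) :=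
  if base_node u then [:: (attr u, false)]
  else [:: (attr u, false); (attr (u.1.+1, u.2), true); (attr (u.1, u.2.+1), true)].

Lemma agrees_pit_word x u : u \in nodes -> agrees x (pit_word u) = pit u x.
Proof.
move=> u_node; rewrite /pit_word /pit /agrees; case: ifP => u_base /=.
  by rewrite entry_attr // !andbT eqbF_neg.
have [l_node r_node] := children_nodes u_node (negbT u_base).
by rewrite !entry_attr // andbT !eqb_id eqbF_neg andbA.
Qed.

Definition pit_node (u : nat * nat) : dnode :=
  if base_node u then DNode (attr u) [:: (false, DLeaf (cantor_pair u).*2)]
  else DNode (attr u) [:: (false, DNode (attr (u.1.+1, u.2))
         [:: (true, DNode (attr (u.1, u.2.+1)) [:: (true, DLeaf (cantor_pair u).*2)])])].

Lemma pit_node_paths u : node_paths (pit_node u) = [:: (pit_word u, (cantor_pair u).*2)].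
Proof. by rewrite /pit_node /pit_word; case: ifP. Qed.

(* One root branch per possible decision, each reading at most three columns. *)
Definition pit_tree : dtree :=
  DNode (attr (0, 0)) [:: (true, DLeaf 1)] :: map pit_node nodes.

Lemma pit_tree_pathsP p : p \in tree_paths pit_tree ->
  p = ([:: (attr (0, 0), true)], 1) \/
  exists2 u, u \in nodes & p = (pit_word u, (cantor_pair u).*2).
Proof.
rewrite /tree_paths /= inE => /orP [/eqP ->|]; first by left.
rewrite -map_comp => /flatten_mapP [u u_node] /=.
by rewrite pit_node_paths inE => /eqP ->; right; exists u.
Qed.

Lemma pit_tree_attrs : {subset tree_attrs pit_tree <= cs}.
Proof.
move=> a; rewrite /tree_attrs /= inE => /orP [/eqP ->|]; first exact/attr_in/apex_node.
rewrite -map_comp => /flatten_mapP [u u_node] /=; rewrite /pit_node; case: ifP => u_base /=.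
  by rewrite inE => /eqP ->; apply: attr_in.
have [l_node r_node] := children_nodes u_node (negbT u_base).
by rewrite !inE => /or3P [] /eqP ->; apply: attr_in.
Qed.

Lemma pit_tree_psi psi n : bounded_measure psi -> (forall a, a \in cs -> psi [:: a] <= n) ->
  tree_psi psi pit_tree <= 3 * n.
Proof.
move=> [[_ _ _ psi_subadd] _] psi_cols.
have psi_attr v : v \in nodes -> psi [:: attr v] <= n by move/attr_in/psi_cols.
apply/bigmax_leqP_seq => p /pit_tree_pathsP [->|[u u_node ->]] _ /=.
  by apply: leq_trans (psi_attr _ (apex_node t_gt0)) _; lia.
rewrite /pit_word; case: ifP => u_base /=; first by apply: leq_trans (psi_attr _ u_node) _; lia.
have [l_node r_node] := children_nodes u_node (negbT u_base).
have := psi_subadd [:: attr u] [:: attr (u.1.+1, u.2); attr (u.1, u.2.+1)].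
have := psi_subadd [:: attr (u.1.+1, u.2)] [:: attr (u.1, u.2.+1)].
have := psi_attr _ u_node; have := psi_attr _ l_node; have := psi_attr _ r_node.
rewrite /=; lia.
Qed.

Section Relabelling.
Variable Q : table.
Hypotheses (Q_wf : wf_table Q) (Q_complete : complete Q) (cols_Q : cols Q = cs).

Definition relabelled : table := opJ decision_set Q.

Lemma mem_relabelled r : r \in rows relabelled <-> size r.1 = size cs /\ r.2 = decision_set r.1.
Proof.
split=> [/mapP [r0 r0_Q ->]|]; last case: r => x D /= [size_x ->].
  by case/and5P: Q_wf => _ /allP /(_ _ r0_Q) /eqP; rewrite cols_Q.
have size_x' : size x = size (cols Q) by rewrite cols_Q.
have /mapP [r0 r0_Q E] := mem_complete_rows Q_wf Q_complete size_x'.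
by apply/mapP; exists r0; rewrite // E.
Qed.

Lemma mem_relabelled_subtable w r : r \in rows (subtable relabelled w) <->
  (size r.1 = size cs /\ r.2 = decision_set r.1) /\ agrees r.1 w.
Proof.
rewrite mem_subtable -mem_relabelled /val_at /= cols_Q.
by split => [/andP [] | [-> ?]].
Qed.

Lemma full_tree_dt : is_dt relabelled [:: full_tree cs [::]].
Proof.
split; last by rewrite /det_tree /= full_tree_det.
have paths : tree_paths [:: full_tree cs [::]] = node_paths (full_tree cs [::]).
  by rewrite /tree_paths /= cats0.
split.
- by rewrite /wf_tree /= full_tree_wf.
- by move=> a; rewrite /tree_attrs /= cats0 cols_Q => /full_tree_attrs.
- move=> r /mem_relabelled [size_r r2]; exists (zip cs r.1, first_decision ([::] ++ r.1)).
    by rewrite paths; apply: full_tree_paths_zip.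
  by apply/mem_relabelled_subtable; split => //; apply: agrees_zip.
- move=> p; rewrite paths => /full_tree_pathsP [bs size_bs ->] /=.
  right => r /mem_relabelled_subtable [[size_r ->] r_bs].
  by rewrite (agrees_zip_eq size_r size_bs r_bs) first_decision_in.
Qed.

Lemma pit_tree_ndt : is_ndt relabelled pit_tree.
Proof.
have apex := apex_node t_gt0.
split.
- rewrite /wf_tree /= all_map; apply/allP => u _ /=.
  by rewrite /pit_node; case: ifP.
- by move=> a /pit_tree_attrs; rewrite cols_Q.
- move=> r /mem_relabelled [size_r r2].
  case apex1: (node_val r.1 (0, 0)).
    exists ([:: (attr (0, 0), true)], 1); first by rewrite /tree_paths /= mem_head.
    by apply/mem_relabelled_subtable; split => //; rewrite /agrees /= entry_attr ?apex1.
  have [u u_node u_pit] := pit_exists t_gt0 (negbT apex1).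
  exists (pit_word u, (cantor_pair u).*2).
    rewrite /tree_paths /= inE -map_comp; apply/orP; right; apply/flatten_mapP.
    by exists u; rewrite //= pit_node_paths mem_head.
  by apply/mem_relabelled_subtable; split => //; rewrite agrees_pit_word.
- move=> p /pit_tree_pathsP [->|[u u_node ->]] /=; right => r /mem_relabelled_subtable;
    case=> [[_ ->] r_w]; rewrite in_decision_set.
  + by apply: decisions_apex; move: r_w; rewrite /agrees /= entry_attr // andbT => /eqP.
  + by apply: decisions_pit => //; rewrite -agrees_pit_word.
Qed.

Lemma dt_psi_lower_bound psi G : bounded_measure psi -> is_dt relabelled G ->
  t <= tree_psi psi G.
Proof.
move=> psi_bounded; case=> [[_ _ cov val] /andP [/eqP size_G det_G]].
case: G size_G cov val det_G => [|r []] //= _ cov val; rewrite andbT => det_r.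
have paths : tree_paths [:: r] = node_paths r by rewrite /tree_paths /= cats0.
have cov_r : covers r [::].
  move=> x size_x _; have x_row : (x, decision_set x) \in rows relabelled by apply/mem_relabelled.
  have [p] := cov _ x_row; rewrite paths => p_r /mem_relabelled_subtable [_ x_p].
  by exists p.
have [p p_r inv_p] := adversary_path det_r adversary_inv_nil cov_r.
apply: (@leq_trans (size p.1)).
  apply: (adversary_decision_depth (dc := p.2) inv_p) => x size_x x_p.
  have x_row : (x, decision_set x) \in rows (subtable relabelled p.1).
    by apply/mem_relabelled_subtable.
  have p_G : p \in tree_paths [:: r] by rewrite paths.
  have [E|] := val p p_G; first by rewrite E in x_row.
  by move/(_ _ x_row); rewrite in_decision_set.
have p_G : p \in tree_paths [:: r] by rewrite paths.
apply: (@leq_trans (psi (map fst p.1))).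
  by rewrite -(size_map fst); case: psi_bounded.
exact: (@leq_bigmax_seq _ _ xpredT (fun p => psi (map fst p.1)) p p_G isT).
Qed.

End Relabelling.

End Labelling.

Lemma Hset_ge_of_complete A psi n T Q t : in_M A -> closed_class A -> bounded_measure psi ->
  A T -> m_psi psi T <= n -> in_closure T Q -> complete Q -> 0 < t ->
  tri t <= size (cols Q) -> exists2 k, Hset psi A (3 * n) k & t <= k.
Proof.
move=> A_M A_closed psi_bounded A_T le_mT T_Q Q_complete t_gt0 tri_Q.
have A_Q : A Q by apply/A_closed; exists T.
have Q_wf := A_M _ A_Q; have uniq_Q : uniq (cols Q) by case/and5P: Q_wf.
have psi_cols a : a \in cols Q -> psi [:: a] <= n.
  move/(closure_cols T_Q) => a_T; apply: leq_trans le_mT.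
  exact: (@leq_bigmax_seq _ _ xpredT (fun a => psi [:: a]) a a_T isT).
have tri_gt0 : 0 < tri t by case: (t) t_gt0 => // s _; rewrite /= addnS.
have Q_ne : cols Q != [::] by apply: contraTneq tri_Q => ->; rewrite -ltnNge.
set R := relabelled t Q.
have A_R : A R.
  apply/A_closed; exists Q; split => //; exists [::], (decision_set t); split => //.
  by split; [apply: decision_set_neq0 | rewrite opI_nil].
have R_ne : nonempty_table R.
  by rewrite /nonempty_table size_map (eqP Q_complete) -lt0n expn_gt0.
have [a R_a le_a] := psia_exists psi R_ne (pit_tree_ndt t_gt0 uniq_Q tri_Q Q_wf Q_complete erefl).
have [G G_R R_G] := psid_exists psi R_ne (full_tree_dt t_gt0 uniq_Q Q_wf Q_complete erefl).
exists (tree_psi psi G).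
  exists R; split => //; exists a => //.
  exact: leq_trans le_a (pit_tree_psi t_gt0 uniq_Q tri_Q psi_bounded psi_cols).
exact: (dt_psi_lower_bound t_gt0 uniq_Q tri_Q Q_wf Q_complete _ psi_bounded G_R).
Qed.

Lemma Zset_tri_bound A psi n h : in_M A -> closed_class A -> bounded_measure psi ->
  H_value psi A (3 * n) h -> forall z, Zset psi A n z ->
  exists t, tri t <= z < tri t.+1 /\ t <= h.
Proof.
move=> A_M A_closed psi_bounded [_ h_max] z [T [A_T le_mT T_z]].
have [t /andP [lo hi]] := tri_bracket z; exists t; rewrite lo hi; split => //.
case: t lo {hi} => // t lo.
case: T_z => [[Q [T_Q Q_complete size_Q _]]|[_ z0]]; last by move: lo; rewrite z0 /=; lia.
have tri_Q : tri t.+1 <= size (cols Q) by rewrite size_Q.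
have [k Hk le_tk] :=
  Hset_ge_of_complete A_M A_closed psi_bounded A_T le_mT T_Q Q_complete (ltn0Sn t) tri_Q.
exact: leq_trans le_tk (h_max _ Hk).
Qed.

From Stdlib Require Import Reals Lra.

Lemma sqrt_double_le_of_lt_tri (z t : nat) : z < tri t.+1 -> (sqrt (2 * INR z) - 3 <= INR t)%R.
Proof.
move=> lt_z; have : 2 * z <= (t + 2) * (t + 2) by have := double_tri t.+1; lia.
rewrite -!multE -!plusE => /leP /le_INR; rewrite !mult_INR !plus_INR /= => le_2z.
have t_ge0 := pos_INR t.
have : (sqrt (2 * INR z) <= INR t + 2)%R.
  by rewrite -(sqrt_square (INR t + 2)); [apply: sqrt_le_1_alt | ]; lra.
lra.
Qed.

Theorem lemma12 (A : table -> Prop) (psi : seq nat -> nat) :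
  in_M A -> closed_class A -> nontrivial A -> bounded_measure psi ->
  (forall n, H_defined psi A n) ->
  forall n : nat,
    Z_defined psi A n /\
    (forall z h : nat, Z_value psi A n z -> H_value psi A (3 * n) h ->
       (sqrt (2 * INR z) - 3 <= INR h)%R).
Proof.
move=> A_M A_closed A_nontriv psi_bounded H_def n; split.
  have [h Hh] := H_def (3 * n).
  apply: (@ex_maximum _ (tri h.+1)).
    by exists 0, Lambda; split; [exact: Lambda_in | rewrite /m_psi big_nil | exact: Z_Lambda].
  move=> z /(Zset_tri_bound A_M A_closed psi_bounded Hh) [t [/andP [_ hi] le_th]].
  by apply: ltnW; apply: leq_trans hi (leq_tri _).
move=> z h [Zz _] Hh.
have [t [/andP [_ hi] le_th]] := Zset_tri_bound A_M A_closed psi_bounded Hh Zz.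
by apply: Rle_trans (sqrt_double_le_of_lt_tri hi) (le_INR _ _ (leP le_th)).
Qed.
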